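(* Let $\mathcal{C}l(E)$ be a general Clifford algebra on $E=\{1,\dots,p\}$ and $n\ge1$. For $\mathcal{C}l(E)$-symmetric matrices $\mathcal M$ with the diffusion operator $\mathrm L_{\mathbb E,\mathcal Cl}$, let $P(X)=\det(\mathcal M-X\,\mathrm{Id})$ and $U(X)=(\mathcal M-X\,\mathrm{Id})^{-1}$. Then $U(X)$ is again $\mathcal{C}l(E)$-symmetric, i.e. its blocks are $U(X)^{A,B}=(A\Delta B|B)U(X)^{A\Delta B}$ for matrices $U(X)^C:=U(X)^{C,\emptyset}$, and $$\Gamma_{\mathbb E,\mathcal Cl}(P(X),P(Y))=\frac{2^p}{Y-X}\big(P'(X)P(Y)-P'(Y)P(X)\big),$$ $$\frac{\mathrm L_{\mathbb E,\mathcal Cl}(P)}{P}=\Gamma_{\mathbb E,\mathcal Cl}(\log P(X),\log P(X))-\frac12\Big(\sum_{A\subset E}(A|A)\Big)\mathrm{trace}\big(U(X)^2\big)-2^{p-1}\sum_{C\subset E}(C|C)H(C)\big(\mathrm{trace}\,U(X)^C\big)^2,$$ where $H(C)=\sum_{A\subset E}(A|C)(C|A)$. Moreover $\mathrm{trace}(U(X)^2)=\frac{P'^2}{P^2}-\frac{P''}{P}$.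
   Context: General Clifford algebra: real algebra with basis $(\omega_A)_{A\subset E}$, $\omega_\emptyset$ the unit, product $\omega_A\omega_B=(A|B)\,\omega_{A\Delta B}$ ($A\Delta B$ the symmetric difference), where $(A|B)=\prod_{i\in A,j\in B}(i|j)$, with $(i|j)=1$ for $i<j$ and arbitrary fixed signs $(j|i)\in\{\pm1\}$ ($i<j$), $(i|i)\in\{\pm1\}$. $\mathcal Cl(E)$-symmetric matrix: given real $n\times n$ matrices $M^C$, $C\subset E$, with $(M^C)^T=(C|C)M^C$, $\mathcal M$ is the real $(n2^p)\times(n2^p)$ block matrix with blocks indexed by pairs $(A,B)$ of subsets of $E$, block $\mathcal M^{A,B}=(A\Delta B|B)M^{A\Delta B}$. $\mathrm L_{\mathbb E,\mathcal Cl}$ is the diffusion operator in the coordinates $M^C_{ij}$ determined by $\mathrm L(M^C_{ij})=0$, $\Gamma(M^A_{ij},M^B_{kl})=\tfrac12\delta_{A,B}(\delta_{ik}\delta_{jl}+(A|A)\delta_{il}\delta_{jk})$, via the chain rule $\mathrm L(\Phi(f))=\sum_i\partial_i\Phi\,\mathrm Lf_i+\sum_{ij}\partial^2_{ij}\Phi\,\Gamma(f_i,f_j)$, $\Gamma(f,g)=\tfrac12(\mathrm L(fg)-f\mathrm Lg-g\mathrm Lf)$. Primes denote derivatives in $X$. *)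

From HB Require Import structures.
From mathcomp Require Import all_boot all_order all_algebra.
Set Implicit Arguments. Unset Strict Implicit. Unset Printing Implicit Defensive.
Import Order.TTheory GRing.Theory Num.Theory.
Local Open Scope ring_scope.

(* E = {1,...,p} is modelled by 'I_p with its natural order.
   The signs (i|j) are encoded by s : 'I_p -> 'I_p -> bool via
   (i|j) = (-1)^(s i j); the Clifford condition (i|j) = 1 for i < j is the
   hypothesis [forall i j, i < j -> s i j = false] of the theorem. *)

Definition symdiff (p : nat) (A B : {set 'I_p}) : {set 'I_p} :=
  (A :\: B) :|: (B :\: A).

Definition cl (S : pzRingType) (p : nat) (s : 'I_p -> 'I_p -> bool)
  (A B : {set 'I_p}) : S :=
  \prod_(i in A) \prod_(j in B) (-1) ^+ s i j.
Arguments cl {S p} s A B.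

(* block indices (A, i) of the big (n 2^p) x (n 2^p) matrix *)
Definition idx (p n : nat) := ({set 'I_p} * 'I_n)%type.
Notation NN p n := #|{: idx p n}|.

Definition clmx (S : pzRingType) (p n : nat) (s : 'I_p -> 'I_p -> bool)
  (M : {set 'I_p} -> 'M[S]_n) : 'M[S]_(NN p n) :=
  \matrix_(r, c)
    let: (A, i) := (enum_val r : idx p n) in
    let: (B, j) := (enum_val c : idx p n) in
    cl s (symdiff A B) B * M (symdiff A B) i j.

Definition blk (S : Type) (p n : nat) (U : 'M[S]_(NN p n)) (C : {set 'I_p})
  : 'M[S]_n :=
  \matrix_(i, j) U (enum_rank ((C, i) : idx p n)) (enum_rank ((set0, j) : idx p n)).

Definition coord (p n : nat) := ({set 'I_p} * 'I_n * 'I_n)%type.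

Definition unitM (S : pzRingType) (p n : nat) (a : coord p n)
  : {set 'I_p} -> 'M[S]_n :=
  fun C => if C == a.1.1 then delta_mx a.1.2 a.2 else 0.
Arguments unitM S {p n} a C.

(* Polynomial functionals of the family (M^C): given uniformly over
   commutative rings S, with an embedding of the real constants. *)
Definition functional (R : pzRingType) (p n : nat) :=
  forall S : comPzRingType, (R -> S) -> ({set 'I_p} -> 'M[S]_n) -> S.

(* first partial derivative d/dM^a_{..} at M (exact, for polynomial maps):
   coefficient of t in F(M + t e_a) *)
Definition d1 (R : comNzRingType) (p n : nat) (F : functional R p n)
  (M : {set 'I_p} -> 'M[R]_n) (a : coord p n) : R :=
  (F {poly R} polyC (fun C => map_mx polyC (M C) + 'X *: unitM _ a C))`_1.

(* second partial derivative d^2/dM^a dM^b at M: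
   coefficient of t s in F(M + t e_a + s e_b) *)
Definition d2 (R : comNzRingType) (p n : nat) (F : functional R p n)
  (M : {set 'I_p} -> 'M[R]_n) (a b : coord p n) : R :=
  (F {poly {poly R}} (fun x => (x%:P)%:P)
     (fun C => map_mx (fun x => (x%:P)%:P) (M C)
               + ('X : {poly {poly R}}) *: unitM _ a C
               + (('X : {poly R})%:P) *: unitM _ b C))`_1`_1.

Definition gam (R : fieldType) (p n : nat) (s : 'I_p -> 'I_p -> bool)
  (a b : coord p n) : R :=
  let: (A, i, j) := a in
  let: (B, k, l) := b in
  if A == B then
    2^-1 * (((i == k) && (j == l))%:R + cl s A A * ((i == l) && (j == k))%:R)
  else 0.
Arguments gam {R p n} s a b.

(* L_{E,Cl} and Gamma_{E,Cl} on smooth (here: polynomial) functionals,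
   via the chain rule with L(M^C_ij) = 0. *)
Definition GammaCl (R : fieldType) (p n : nat) (s : 'I_p -> 'I_p -> bool)
  (F G : functional R p n) (M : {set 'I_p} -> 'M[R]_n) : R :=
  \sum_(a : coord p n) \sum_(b : coord p n) gam s a b * d1 F M a * d1 G M b.

Arguments GammaCl {R p n} s F G M.
Definition LCl (R : fieldType) (p n : nat) (s : 'I_p -> 'I_p -> bool)
  (F : functional R p n) (M : {set 'I_p} -> 'M[R]_n) : R :=
  \sum_(a : coord p n) \sum_(b : coord p n) gam s a b * d2 F M a b.

Arguments LCl {R p n} s F M.
Definition Pfun (R : pzRingType) (p n : nat) (s : 'I_p -> 'I_p -> bool) (x : R)
  : functional R p n :=
  fun S emb M => \det (clmx s M - (emb x)%:M).

Arguments Pfun {R p n} s x S emb M.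
Definition Ppoly (R : comNzRingType) (p n : nat) (s : 'I_p -> 'I_p -> bool)
  (M : {set 'I_p} -> 'M[R]_n) : {poly R} :=
  \det (map_mx polyC (clmx s M) - 'X%:M).

Definition Umx (R : fieldType) (p n : nat) (s : 'I_p -> 'I_p -> bool)
  (M : {set 'I_p} -> 'M[R]_n) (x : R) : 'M[R]_(NN p n) :=
  invmx (clmx s M - x%:M).


Definition Hfun (R : pzRingType) (p : nat) (s : 'I_p -> 'I_p -> bool)
  (C : {set 'I_p}) : R :=
  \sum_(A : {set 'I_p}) cl s A C * cl s C A.
Arguments Hfun {R p} s C.

From Pilot Require Import Defs.
From HB Require Import structures.
From mathcomp Require Import all_boot all_order all_algebra.
From mathcomp Require Import fingroup perm.
From mathcomp Require Import ring.
Set Implicit Arguments. Unset Strict Implicit. Unset Printing Implicit Defensive.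
Import Order.TTheory GRing.Theory Num.Theory.
Local Open Scope ring_scope.

(* Everything is linear algebra on the big matrix B = clmx s M.
   - Cl(E)-symmetric matrices (isCl) form a unital subalgebra of the square
     matrices of size n 2^p, compatible with transposition and with ring
     morphisms (clmx_mul, trmx_clmx, clmx_map).  By Cayley-Hamilton it is
     closed under inversion (invmx_closed), which gives the first claim:
     U(x) = (B - x)^-1 is Cl(E)-symmetric.  Evaluating the generic matrix
     A - X Id over the fraction field of S[X] shows that it also contains
     adjugates (isCl_adj), needed for Gamma(P(x), P(y)) at arbitrary x, y.
   - The partial derivatives of P in the coordinates M^C_ij are coefficients
     of determinants of matrix pencils.  Jacobi's formula (deriv_det) turns
     them into traces against the big matrices E_a of the coordinates:
     tr (adj(B - x) E_a) at first order, and at second order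
     det (B - x) (tr(U E_b) tr(U E_a) - tr(U E_b U E_a)) (d1_Pfun, d2_Pfun).
   - Contracting such traces with Gamma on coordinates gives 2^p tr(X Y)
     (gamma_tr_tr) and, for the quadratic term, the two sign sums of
     gamma_tr_quad, where H(C) appears after reindexing by symmetric
     differences.
   - The resolvent identity for adj(B - x) adj(B - y) and the expressions of
     P' and P'' through U (CharacteristicDeterminant) give the remaining
     three identities. *)

Section SymmetricDifference.
Variable p : nat.
Implicit Types A B C : {set 'I_p}.

Lemma in_symdiff A B x : (x \in symdiff A B) = (x \in A) (+) (x \in B).
Proof. by rewrite /symdiff !inE; case: (x \in A); case: (x \in B). Qed.

Lemma symdiffC A B : symdiff A B = symdiff B A.
Proof. by apply/setP=> x; rewrite !in_symdiff addbC. Qed.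

Lemma symdiffA A B C : symdiff A (symdiff B C) = symdiff (symdiff A B) C.
Proof. by apply/setP=> x; rewrite !in_symdiff addbA. Qed.

Lemma symdiff0r A : symdiff A set0 = A.
Proof. by apply/setP=> x; rewrite !in_symdiff inE addbF. Qed.

Lemma symdiff0l A : symdiff set0 A = A.
Proof. by rewrite symdiffC symdiff0r. Qed.

Lemma symdiffv A : symdiff A A = set0.
Proof. by apply/setP=> x; rewrite !in_symdiff inE addbb. Qed.

Lemma symdiffK A B : symdiff A (symdiff A B) = B.
Proof. by apply/setP=> x; rewrite !in_symdiff addKb. Qed.

Lemma symdiffKr A B : symdiff (symdiff A B) B = A.
Proof. by apply/setP=> x; rewrite !in_symdiff addbK. Qed.

Lemma symdiff_eq0 A B : (symdiff A B == set0) = (A == B).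
Proof.
apply/eqP/eqP => [AB0|->]; last exact: symdiffv.
by rewrite -(symdiffKr A B) AB0 symdiff0l.
Qed.

Lemma symdiff_inj A : injective (symdiff A).
Proof. by move=> B1 B2 eqB; rewrite -(symdiffK A B1) eqB symdiffK. Qed.

Lemma symdiff_injr A : injective (fun B : {set 'I_p} => symdiff B A).
Proof. by move=> B1 B2 /=; rewrite !(symdiffC _ A); apply: symdiff_inj. Qed.

End SymmetricDifference.

(* The sign (A|B) is bimultiplicative for the symmetric difference and
   squares to one; these are the only properties of the signs we use. *)
Section Signs.
Variables (S : comPzRingType) (p : nat) (s : 'I_p -> 'I_p -> bool).
Implicit Types A B C F : {set 'I_p}.

Lemma prod_symdiff (g : 'I_p -> S) A B : (forall i, g i * g i = 1) ->
  \prod_(i in symdiff A B) g i = \prod_(i in A) g i * \prod_(i in B) g i.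
Proof.
move=> gK; rewrite !(big_mkcond (fun i => i \in _)) -big_split /=.
apply: eq_bigr => i _; rewrite in_symdiff.
by case: (i \in A); case: (i \in B); rewrite /= ?mulr1 ?mul1r ?gK.
Qed.

Lemma prod_involutive (g : 'I_p -> S) (P : pred 'I_p) :
  (forall i, g i * g i = 1) -> \prod_(i | P i) g i * \prod_(i | P i) g i = 1.
Proof. by move=> gK; rewrite -big_split big1 //= => i _; apply: gK. Qed.

Lemma sign_sq (b : bool) : ((-1) ^+ b : S) * (-1) ^+ b = 1.
Proof. by case: b; rewrite ?expr0 ?expr1 ?mulrNN mulr1. Qed.

Lemma cl_sq A B : cl (S:=S) s A B * cl s A B = 1.
Proof.
by apply: prod_involutive => i; apply: prod_involutive => j; apply: sign_sq.
Qed.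

Lemma cl_symdiffl A B C : cl (S:=S) s (symdiff A B) C = cl s A C * cl s B C.
Proof.
by apply: prod_symdiff => i; apply: prod_involutive => j; apply: sign_sq.
Qed.

Lemma cl_symdiffr A B C : cl (S:=S) s C (symdiff A B) = cl s C A * cl s C B.
Proof.
rewrite /cl -big_split /=; apply: eq_bigr => i _.
by apply: prod_symdiff => j; apply: sign_sq.
Qed.

Lemma cl0l B : cl (S:=S) s set0 B = 1.
Proof. by rewrite /cl big_set0. Qed.

Lemma cl0r B : cl (S:=S) s B set0 = 1.
Proof. by rewrite /cl big1 // => i _; rewrite big_set0. Qed.

Lemma cl_symdiff_diag F C :
  cl (S:=S) s (symdiff F C) (symdiff F C)
  = cl s F F * cl s F C * cl s C F * cl s C C.
Proof. by rewrite cl_symdiffl !cl_symdiffr; ring. Qed.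

Lemma cl_sign A B : cl (S:=S) s A B = 1 \/ cl (S:=S) s A B = -1.
Proof.
have sign_mul (x y : S) : x = 1 \/ x = -1 -> y = 1 \/ y = -1 ->
    x * y = 1 \/ x * y = -1.
  by case=> ->; case=> ->; rewrite ?mulr1 ?mulrN1 ?opprK; auto.
apply: (big_ind _ (or_introl erefl) sign_mul) => i _.
apply: (big_ind _ (or_introl erefl) sign_mul) => j _.
by case: (s i j); auto.
Qed.

End Signs.

Lemma cl_rmorph (S S' : comPzRingType) (f : {rmorphism S -> S'}) (p : nat)
  (s : 'I_p -> 'I_p -> bool) (A B : {set 'I_p}) : f (cl s A B) = cl s A B.
Proof.
rewrite /cl rmorph_prod; apply: eq_bigr => i _; rewrite rmorph_prod.
by apply: eq_bigr => j _; rewrite rmorphXn rmorphN1.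
Qed.

(* A big matrix indexed by idx p n = (A, i) is
   Cl(E)-symmetric when it is clmx s Nf for a family of blocks Nf; the family
   is then recovered as its first block column (blk).  Such matrices form a
   subalgebra: the product of two of them is again one (clmx_mul), which is
   the matrix form of the Clifford product omega_A omega_B = (A|B) omega_AB. *)

Lemma matrix_idxP (V : Type) (p n : nat) (X Y : 'M[V]_(NN p n)) :
  (forall A i B j,
     X (enum_rank ((A, i) : idx p n)) (enum_rank ((B, j) : idx p n))
     = Y (enum_rank ((A, i) : idx p n)) (enum_rank ((B, j) : idx p n))) ->
  X = Y.
Proof.
move=> eqXY; apply/matrixP => r c; rewrite -[r]enum_valK -[c]enum_valK.
by case: (enum_val r) => A i; case: (enum_val c) => B j.
Qed.

Lemma clmxE (S : pzRingType) (p n : nat) (s : 'I_p -> 'I_p -> bool)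
  (Nf : {set 'I_p} -> 'M[S]_n) A i B j :
  clmx s Nf (enum_rank ((A, i) : idx p n)) (enum_rank ((B, j) : idx p n))
  = cl s (symdiff A B) B * Nf (symdiff A B) i j.
Proof. by rewrite /clmx mxE !enum_rankK. Qed.

Section ClMatrices.
Variables (S : comNzRingType) (p n : nat) (s : 'I_p -> 'I_p -> bool).
Local Notation T := (idx p n).
Local Notation N := (NN p n).
Implicit Types (A B C E : {set 'I_p}) (Nf Ng : {set 'I_p} -> 'M[S]_n).

Lemma sum_idx (F : 'I_N -> S) :
  \sum_r F r = \sum_A \sum_(i < n) F (enum_rank ((A, i) : T)).
Proof.
rewrite (reindex (@enum_rank T)) /=; last exact/onW_bij/enum_rank_bij.
by rewrite pair_big /=; apply: eq_bigr => -[A i].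
Qed.

Lemma clmx_ext Nf Ng : (forall C, Nf C = Ng C) -> clmx s Nf = clmx s Ng.
Proof. by move=> eqN; apply: matrix_idxP => A i B j; rewrite !clmxE eqN. Qed.

Lemma blk_clmx Nf : blk (clmx s Nf) =1 Nf.
Proof.
by move=> C; apply/matrixP => i j; rewrite mxE clmxE symdiff0r cl0r mul1r.
Qed.

Lemma clmxDZ Nf Ng (c : S) :
  clmx s (fun C => Nf C + c *: Ng C) = clmx s Nf + c *: clmx s Ng.
Proof.
apply: matrix_idxP => A i B j.
rewrite clmxE [RHS]mxE [(c *: clmx s Ng) _ _]mxE !clmxE !mxE.
by rewrite mulrDr mulrCA.
Qed.

Lemma clmx_scalar (c : S) :
  clmx s (fun C => if C == set0 then (c%:M : 'M[S]_n) else 0) = c%:M.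
Proof.
apply: matrix_idxP => A i B j.
rewrite clmxE !mxE symdiff_eq0 (inj_eq enum_rank_inj) xpair_eqE.
case: eqP => [->|_] /=; last by rewrite mxE mulr0.
by rewrite symdiffv cl0l mul1r mxE.
Qed.

Lemma trmx_clmx Nf : (clmx s Nf)^T = clmx s (fun C => cl s C C *: (Nf C)^T).
Proof.
apply: matrix_idxP => A i B j.
rewrite [LHS]mxE !clmxE !mxE [symdiff B A]symdiffC mulrA; congr (_ * _).
by rewrite -cl_symdiffr [symdiff B _]symdiffC symdiffKr.
Qed.

Lemma clmx_mul Nf Ng :
  clmx s Nf *m clmx s Ng =
  clmx s (fun C => \sum_E (cl s E E * cl s E C) *: (Nf E *m Ng (symdiff C E))).
Proof.
apply: matrix_idxP => A i B j.
rewrite clmxE [LHS]mxE sum_idx summxE mulr_sumr.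
rewrite (reindex_inj (@symdiff_inj p A)) /=.
apply: eq_bigr => E _; rewrite !mxE mulrA mulr_sumr; apply: eq_bigr => k _.
rewrite !clmxE symdiffK.
have -> : symdiff (symdiff A E) B = symdiff (symdiff A B) E.
  by rewrite -!symdiffA [symdiff E B]symdiffC.
rewrite !cl_symdiffr !cl_symdiffl; ring.
Qed.

Lemma card_sets : #|{set 'I_p}| = (2 ^ p)%N.
Proof. by rewrite -cardsT -powersetT card_powerset cardsT card_ord. Qed.

(* The trace only sees the diagonal block, repeated 2^p times. *)
Lemma tr_clmx Nf : \tr (clmx s Nf) = (2 ^ p)%:R * \tr (Nf set0).
Proof.
rewrite /mxtrace sum_idx.
under eq_bigr do under eq_bigr do rewrite clmxE symdiffv cl0l mul1r.
by rewrite sumr_const card_sets mulr_natl.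
Qed.

Lemma clmx_map (S' : comNzRingType) (f : {rmorphism S -> S'}) Nf :
  map_mx f (clmx s Nf) = clmx s (fun C => map_mx f (Nf C)).
Proof.
by apply: matrix_idxP => A i B j; rewrite [LHS]mxE !clmxE mxE rmorphM cl_rmorph.
Qed.

Definition isCl (X : 'M[S]_N) : Prop := exists Nf, X = clmx s Nf.

Lemma isClE X : isCl X -> X = clmx s (blk X).
Proof. by case=> Nf ->; apply: clmx_ext => C; rewrite blk_clmx. Qed.

Lemma isCl_add X Y : isCl X -> isCl Y -> isCl (X + Y).
Proof.
case=> Nf -> [Ng ->]; exists (fun C => Nf C + 1 *: Ng C).
by rewrite clmxDZ scale1r.
Qed.

Lemma isCl_scale c X : isCl X -> isCl (c *: X).
Proof.
case=> Nf ->; exists (fun C => c *: Nf C).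
by apply: matrix_idxP => A i B j; rewrite [LHS]mxE !clmxE mxE mulrCA.
Qed.

Lemma isCl_mul X Y : isCl X -> isCl Y -> isCl (X *m Y).
Proof. by case=> Nf -> [Ng ->]; rewrite clmx_mul; eexists. Qed.

Lemma isCl_scalar c : isCl c%:M.
Proof. by rewrite -clmx_scalar; eexists. Qed.

End ClMatrices.

Lemma isCl_map (S S' : comNzRingType) (f : {rmorphism S -> S'})
  (p n : nat) (s : 'I_p -> 'I_p -> bool)
  (X : 'M[S]_(NN p n)) : isCl s X -> isCl s (map_mx f X).
Proof. by case=> Nf ->; rewrite clmx_map; eexists. Qed.

Lemma isCl_map_inj (S S' : comNzRingType) (f : {rmorphism S -> S'})
  (p n : nat) (s : 'I_p -> 'I_p -> bool)
  (X : 'M[S]_(NN p n)) : injective f -> isCl s (map_mx f X) -> isCl s X.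
Proof.
move=> f_inj /isClE fXE; exists (blk X); apply: matrix_idxP => A i B j.
apply: f_inj; rewrite clmxE rmorphM cl_rmorph [blk X _ _ _]mxE.
have := congr1 (fun Y : 'M[S']_(NN p n) =>
  Y (enum_rank ((A, i) : idx p n)) (enum_rank ((B, j) : idx p n))) fXE.
by rewrite /= clmxE !mxE.
Qed.

(* A unital subalgebra of square matrices over a field is closed under
   inversion: by Cayley-Hamilton, A^-1 is a polynomial in A. *)
Lemma invmx_closed (F : fieldType) (m : nat) (P : 'M[F]_m -> Prop)
  (PD : forall X Y, P X -> P Y -> P (X + Y))
  (PM : forall X Y, P X -> P Y -> P (X *m Y))
  (PZ : forall c X, P X -> P (c *: X))
  (Pscalar : forall c, P c%:M) (A : 'M[F]_m) :
  P A -> A \in unitmx -> P (invmx A).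
Proof.
case: m P PD PM PZ Pscalar A => [|m] P PD PM PZ Pscalar A PA unitA.
  by have -> : invmx A = A by apply/matrixP => -[].
have P_horner q : P (horner_mx A q).
  elim/poly_ind: q => [|q c IHq].
    by rewrite rmorph0 -(scale0r 1%:M) scalemx1.
  rewrite rmorphD rmorphM /= horner_mx_X horner_mx_C -mulmxE.
  by apply: PD; [apply: PM|apply: Pscalar].
pose c := char_poly A; pose H := horner_mx A (drop_poly 1 c).
have cE : c = drop_poly 1 c * 'X + (c`_0)%:P.
  apply/polyP => -[|i]; rewrite coefD coefMX coefC /=; first by rewrite add0r.
  by rewrite coef_drop_poly addn1 addr0.
have c0 : c`_0 != 0.
  by rewrite char_poly_det mulf_neq0 ?signr_eq0 // -unitfE -unitmxE.
have HA : H *m A = - (c`_0)%:M.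
  have := Cayley_Hamilton A; rewrite -/c {1}cE rmorphD rmorphM /= horner_mx_X.
  by rewrite horner_mx_C -mulmxE => /eqP; rewrite addr_eq0 => /eqP.
have -> : invmx A = - (c`_0)^-1 *: H.
  rewrite -[H](mulmxK unitA) HA mulNmx mul_scalar_mx scalerN scaleNr opprK.
  by rewrite scalerA mulVf // scale1r.
exact/PZ/P_horner.
Qed.

Lemma adj_invmx (F : fieldType) (m : nat) (A : 'M[F]_m) : A \in unitmx ->
  \adj A = \det A *: invmx A.
Proof.
move=> unitA; rewrite /invmx unitA scalerA divff ?scale1r //.
by rewrite -unitfE -unitmxE.
Qed.

Lemma isCl_invmx (F : fieldType) (p n : nat) (s : 'I_p -> 'I_p -> bool)
  (A : 'M[F]_(NN p n)) : isCl s A -> A \in unitmx -> isCl s (invmx A).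
Proof.
apply: invmx_closed; [exact: isCl_add | exact: isCl_mul | exact: isCl_scale |].
exact: isCl_scalar.
Qed.

Lemma horner_charmx (S : comNzRingType) (m : nat) (A : 'M[S]_m) (x : S) :
  map_mx (horner_eval x) (map_mx polyC A - 'X%:M) = A - x%:M.
Proof.
apply/matrixP => i j; rewrite !mxE horner_evalE hornerD hornerN hornerC.
by rewrite hornerMn hornerX.
Qed.

(* The generic
   matrix A - X Id is invertible over the fraction field of S[X], where its
   adjugate is det *: inverse; specializing X to 0 gives the claim for A. *)
Lemma isCl_adj (S : idomainType) (p n : nat) (s : 'I_p -> 'I_p -> bool)
  (A : 'M[S]_(NN p n)) : isCl s A -> isCl s (\adj A).
Proof.
move=> ClA; pose AX := map_mx polyC A - 'X%:M.
have ClAX : isCl s AX.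
  apply: isCl_add; first exact: isCl_map.
  by rewrite -scaleN1r; apply/isCl_scale/isCl_scalar.
have detAX : \det AX != 0.
  have -> : AX = - char_poly_mx A by rewrite /char_poly_mx opprB.
  by rewrite -scaleN1r detZ mulf_neq0 ?signr_eq0 // monic_neq0 ?char_poly_monic.
pose toF := @tofrac {poly S}.
have unitAX : map_mx toF AX \in unitmx.
  by rewrite unitmxE det_map_mx unitfE tofrac_eq0.
have ClAdjAX : isCl s (\adj AX).
  apply: (isCl_map_inj (f := toF)) => [x y /eqP|].
    by rewrite tofrac_eq => /eqP.
  rewrite map_mx_adj adj_invmx //; apply/isCl_scale/isCl_invmx => //.
  exact: isCl_map.
have := isCl_map (horner_eval 0) ClAdjAX.
by rewrite map_mx_adj horner_charmx raddf0 subr0.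
Qed.

Section Jacobi.
Variables (S : comNzRingType) (m : nat).
Implicit Types K : 'M[{poly S}]_m.

Lemma deriv_prod_seq (I : eqType) (r : seq I) (F : I -> {poly S}) : uniq r ->
  (\prod_(i <- r) F i)^`()
  = \sum_(i <- r) (F i)^`() * \prod_(j <- r | j != i) F j.
Proof.
elim: r => [|a r IHr] /=; first by rewrite !big_nil -polyC1 derivC.
case/andP=> a_notin_r uniq_r; rewrite !big_cons derivM IHr // eqxx /=.
congr (_ + _).
  congr (_ * _); rewrite [RHS]big_seq_cond [LHS]big_seq; apply: eq_bigl => j.
  case r_j: (j \in r) => //=; apply/esym/negP => /eqP aj.
  by rewrite -aj r_j in a_notin_r.
rewrite mulr_sumr; apply: eq_big_seq => i r_i; rewrite big_cons mulrCA.
by have -> : (a != i) by apply/negP => /eqP ai; rewrite ai r_i in a_notin_r.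
Qed.

Lemma deriv_prod (I : finType) (F : I -> {poly S}) :
  (\prod_i F i)^`() = \sum_i (F i)^`() * \prod_(j | j != i) F j.
Proof. exact: (deriv_prod_seq F (index_enum_uniq I)). Qed.

(* The terms of the Leibniz expansion where row i is differentiated sum to
   the determinant of K with its i-th row differentiated, i.e. to the row-i
   cofactor expansion against K'. *)
Lemma deriv_det_row K (i : 'I_m) :
  \sum_(s : 'S_m) (-1) ^+ s * ((K i (s i))^`() * \prod_(j | j != i) K j (s j))
  = \sum_k (K i k)^`() * cofactor K i k.
Proof.
pose Ki := \matrix_(r, c) if r == i then (K r c)^`() else K r c.
have -> : \sum_k (K i k)^`() * cofactor K i k = \det Ki.
  rewrite (expand_det_row Ki i); apply: eq_bigr => k _.
  rewrite mxE eqxx /cofactor; congr (_ * (_ * \det _)).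
  by apply/matrixP => a b; rewrite !mxE eq_sym (negbTE (neq_lift _ _)).
apply: eq_bigr => s _; congr (_ * _).
rewrite [RHS](bigD1 i) //= mxE eqxx; congr (_ * _); apply: eq_bigr => j ji.
by rewrite mxE (negbTE ji).
Qed.

Lemma deriv_det K : (\det K)^`() = \tr (\adj K *m map_mx deriv K).
Proof.
have deriv_sign (b : bool) (q : {poly S}) :
    ((-1) ^+ b * q)^`() = (-1) ^+ b * q^`().
  by case: b; rewrite ?expr0 ?mul1r ?expr1 ?mulN1r ?derivN.
rewrite /determinant raddf_sum /=.
under eq_bigr do rewrite deriv_sign deriv_prod mulr_sumr.
rewrite exchange_big /mxtrace; under eq_bigr do rewrite deriv_det_row.
rewrite exchange_big; apply: eq_bigr => k _; rewrite mxE.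
by apply: eq_bigr => i _; rewrite !mxE mulrC.
Qed.

Lemma deriv_mulmx (k l : nat) (X : 'M[{poly S}]_(m, k)) (Y : 'M_(k, l)) :
  map_mx deriv (X *m Y) = map_mx deriv X *m Y + X *m map_mx deriv Y.
Proof.
apply/matrixP => i j; rewrite !mxE raddf_sum -big_split /=.
by apply: eq_bigr => t _; rewrite !mxE derivM.
Qed.

(* Differentiating K adj K = det K. *)
Lemma deriv_adj K :
  map_mx deriv K *m \adj K + K *m map_mx deriv (\adj K) = ((\det K)^`())%:M.
Proof.
rewrite -deriv_mulmx mul_mx_adj; apply/matrixP => i j; rewrite !mxE derivMn.
by case: (i == j); rewrite ?mulr0n ?deriv0.
Qed.

Lemma deriv_tr (X : 'M[{poly S}]_m) : (\tr X)^`() = \tr (map_mx deriv X).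
Proof.
by rewrite /mxtrace raddf_sum; apply: eq_bigr => i _; rewrite [RHS]mxE.
Qed.

Lemma deriv_map_polyC (k l : nat) (E : 'M[S]_(k, l)) :
  map_mx deriv (map_mx polyC E) = 0.
Proof. by apply/matrixP => i j; rewrite !mxE derivC. Qed.

End Jacobi.

Lemma horner_tr (S : comNzRingType) (m : nat) (X : 'M[{poly S}]_m) (x : S) :
  (\tr X).[x] = \tr (map_mx (horner_eval x) X).
Proof. by rewrite trace_map_mx. Qed.

Lemma horner_deriv_adj (F : fieldType) (m : nat) (K : 'M[{poly F}]_m)
  (x : F) :
  let K0 := map_mx (horner_eval x) K in
  let K1 := map_mx (horner_eval x) (map_mx deriv K) in
  K0 \in unitmx ->
  map_mx (horner_eval x) (map_mx deriv (\adj K))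
  = invmx K0 *m ((\tr (\adj K0 *m K1))%:M - K1 *m \adj K0).
Proof.
move=> K0 K1 unitK0; apply: (canRL (mulKmx unitK0)).
have := congr1 (map_mx (horner_eval x)) (deriv_adj K).
rewrite map_mxD !map_mxM map_mx_adj map_scalar_mx /= horner_evalE deriv_det.
rewrite horner_tr map_mxM map_mx_adj -/K0 -/K1 => <-.
by rewrite [_ + K0 *m _]addrC addrK.
Qed.

Lemma horner_map_polyC (S : comNzRingType) (k l : nat) (E : 'M[S]_(k, l)) x :
  map_mx (horner_eval x) (map_mx polyC E) = E.
Proof. by apply/matrixP => i j; rewrite !mxE /= horner_evalE hornerC. Qed.

Lemma coef1E (S : comNzRingType) (q : {poly S}) : q`_1 = (q^`()).[0].
Proof. by rewrite horner_coef0 coef_deriv mulr1n. Qed.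

Definition pencil (S : comNzRingType) (m : nat) (Y Z : 'M[S]_m)
  : 'M[{poly S}]_m :=
  map_mx polyC Y + 'X *: map_mx polyC Z.

Section Pencil.
Variables (S : comNzRingType) (m : nat) (Y Z : 'M[S]_m).

Lemma horner_pencil0 : map_mx (horner_eval 0) (pencil Y Z) = Y.
Proof. by apply/matrixP => i j; rewrite !mxE horner_evalE !hornerE. Qed.

Lemma deriv_pencil : map_mx deriv (pencil Y Z) = map_mx polyC Z.
Proof.
apply/matrixP => i j; rewrite !mxE derivD derivC derivM derivX derivC.
by rewrite mulr0 addr0 mul1r add0r.
Qed.

Lemma det_pencil_coef1 : (\det (pencil Y Z))`_1 = \tr (\adj Y *m Z).
Proof.
rewrite coef1E deriv_det horner_tr map_mxM map_mx_adj horner_pencil0.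
congr (\tr (_ *m _)); rewrite deriv_pencil; apply/matrixP => i j.
by rewrite !mxE /= horner_evalE hornerC.
Qed.

End Pencil.

Lemma det_pencil2_coef11 (F : fieldType) (m : nat) (A Ea Eb : 'M[F]_m) :
  A \in unitmx ->
  (\det (pencil (pencil A Eb) (map_mx polyC Ea)))`_1`_1
  = \det A * (\tr (invmx A *m Eb) * \tr (invmx A *m Ea)
              - \tr (invmx A *m Eb *m invmx A *m Ea)).
Proof.
move=> unitA; rewrite det_pencil_coef1 coef1E deriv_tr deriv_mulmx.
rewrite deriv_map_polyC mulmx0 addr0 horner_tr map_mxM horner_map_polyC.
rewrite horner_deriv_adj horner_pencil0 ?deriv_pencil ?horner_map_polyC //.
rewrite adj_invmx // -scalemxAl mxtraceZ -scalemxAr -scalemx1.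
rewrite mulmxBr mulmxBl raddfB /= -!scalemxAr -!scalemxAl !mxtraceZ mulmx1.
by rewrite !mulmxA; ring.
Qed.

Section CharacteristicDeterminant.
Variables (F : fieldType) (m : nat) (B : 'M[F]_m).
Local Notation BX := (map_mx polyC B - 'X%:M).

Lemma deriv_charmx : map_mx deriv BX = (-1)%:M.
Proof.
apply/matrixP => i j; rewrite !mxE derivB derivC derivMn derivX sub0r.
by rewrite mulNrn.
Qed.

Lemma horner_det_charmx x : (\det BX).[x] = \det (B - x%:M).
Proof. by rewrite -horner_evalE -det_map_mx horner_charmx. Qed.

Lemma deriv_det_charmx : (\det BX)^`() = - \tr (\adj BX).
Proof. by rewrite deriv_det deriv_charmx mul_mx_scalar mxtraceZ mulN1r. Qed.

Lemma horner_deriv_det_charmx x :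
  (\det BX)^`().[x] = - \tr (\adj (B - x%:M)).
Proof.
by rewrite deriv_det_charmx hornerN horner_tr map_mx_adj horner_charmx.
Qed.

Lemma horner_deriv2_det_charmx x : B - x%:M \in unitmx ->
  let V := invmx (B - x%:M) in
  (\det BX)^`()^`().[x] = \det (B - x%:M) * (\tr V ^+ 2 - \tr (V *m V)).
Proof.
move=> unitBx V; rewrite deriv_det_charmx derivN deriv_tr hornerN horner_tr.
rewrite horner_deriv_adj horner_charmx // deriv_charmx map_scalar_mx /=.
rewrite horner_evalE hornerN hornerC adj_invmx // -/V.
rewrite mul_mx_scalar mul_scalar_mx !scaleN1r opprK -scalemx1 mulmxDr.
by rewrite -!scalemxAr mulmx1 mxtraceD raddfN /= !mxtraceZ; ring.
Qed.

(* Resolvent identity for adjugates: from adj(B - x) (B - y) adj(B - y)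
   = det(B - y) adj(B - x) and B - y = (B - x) + (x - y). *)
Lemma tr_adj_mul_adj x y : x != y ->
  \tr (\adj (B - x%:M) *m \adj (B - y%:M))
  = (\det (B - y%:M) * \tr (\adj (B - x%:M))
     - \det (B - x%:M) * \tr (\adj (B - y%:M))) / (x - y).
Proof.
move=> xy; set X := \adj (B - x%:M); set Y := \adj (B - y%:M).
have : X *m (B - y%:M) *m Y = \det (B - y%:M) *: X.
  by rewrite -mulmxA mul_mx_adj mul_mx_scalar.
have -> : B - y%:M = B - x%:M + (x - y)%:M by rewrite raddfB addrA subrK.
rewrite mulmxDr mul_adj_mx mulmxDl mul_scalar_mx mul_mx_scalar -scalemxAl.
move=> /(congr1 mxtrace); rewrite mxtraceD !mxtraceZ => <-.
by field; rewrite subr_eq0.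
Qed.

End CharacteristicDeterminant.

Lemma unitM_map (S S' : comNzRingType) (f : {rmorphism S -> S'}) (p n : nat)
  (a : Defs.coord p n) (C : {set 'I_p}) :
  map_mx f (unitM S a C) = unitM S' a C.
Proof. by rewrite /unitM; case: (C == a.1.1); rewrite ?map_delta_mx ?map_mx0. Qed.

(* The partial derivatives of P(x) = det (M - x Id) in the coordinates M^C_ij:
   perturbing M along the elementary family e_a perturbs the big matrix along
   clmx s (unitM R a), so the derivatives are the coefficients of a
   (double) matrix pencil computed in det_pencil_coef1 and
   det_pencil2_coef11. *)
Section PartialDerivatives.
Variables (R : fieldType) (p n : nat) (s : 'I_p -> 'I_p -> bool)
  (M : {set 'I_p} -> 'M[R]_n) (x : R).
Local Notation Bx := (clmx s M - x%:M).
Local Notation E a := (clmx s (unitM R a)).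

Lemma d1_Pfun a : d1 (Pfun s x) M a = \tr (\adj Bx *m E a).
Proof.
rewrite /d1 /Pfun -det_pencil_coef1 /pencil clmxDZ map_mxB map_scalar_mx /=.
rewrite !clmx_map; congr ((\det _ : {poly R})`_1).
rewrite addrAC; congr (_ + _); congr (_ *: _).
by apply: clmx_ext => C; rewrite unitM_map.
Qed.

Lemma d2_Pfun a b : Bx \in unitmx ->
  let V := invmx Bx in
  d2 (Pfun s x) M a b
  = \det Bx * (\tr (V *m E b) * \tr (V *m E a) - \tr (V *m E b *m V *m E a)).
Proof.
move=> unitBx V; rewrite -det_pencil2_coef11 // /d2 /Pfun /pencil.
rewrite !clmxDZ !map_mxD !map_mxZ /= !clmx_map.
congr ((\det _ : {poly {poly R}})`_1`_1).
have eM : clmx s (fun C => map_mx (fun r => (r%:P)%:P) (M C))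
    = clmx s (fun C => map_mx polyC (map_mx polyC (M C))).
  by apply: clmx_ext => C; apply/matrixP => i j; rewrite !mxE.
have eE e : clmx s (unitM {poly {poly R}} e)
    = clmx s (fun C => map_mx polyC (map_mx polyC (unitM R e C))).
  by apply: clmx_ext => C; rewrite !unitM_map.
rewrite eM !eE !map_mxN !map_scalar_mx /=.
by rewrite [LHS]addrAC [X in X + _ = _]addrAC [RHS]addrAC.
Qed.
End PartialDerivatives.

Section MatrixUnits.
Variables (S : comNzRingType) (m : nat).
Implicit Types X Y : 'M[S]_m.

Lemma mulmx_deltaE X k l j t :
  (X *m (delta_mx k l : 'M[S]_m)) j t = X j k * (t == l)%:R.
Proof.
rewrite mxE (bigD1 k) //= big1 => [|u uk]; last by rewrite mxE (negbTE uk) mulr0.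
by rewrite mxE eqxx addr0.
Qed.

Lemma tr_delta X i j : \tr (X *m delta_mx i j) = X j i.
Proof.
rewrite /mxtrace (bigD1 j) //= big1 => [|t tj]; last first.
  by rewrite mulmx_deltaE (negbTE tj) mulr0.
by rewrite mulmx_deltaE eqxx mulr1 addr0.
Qed.

Lemma tr_delta2 X Y i j k l :
  \tr (X *m delta_mx k l *m (Y *m delta_mx i j)) = X j k * Y l i.
Proof.
rewrite mulmxA tr_delta mxE (bigD1 l) //= big1 => [|t tl]; last first.
  by rewrite mulmx_deltaE (negbTE tl) mulr0 mul0r.
by rewrite mulmx_deltaE eqxx mulr1 addr0.
Qed.

End MatrixUnits.

Section GammaContraction.
Variables (R : numFieldType) (p n : nat) (s : 'I_p -> 'I_p -> bool).
Local Notation E a := (clmx s (unitM R a)).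
Local Notation two_p := ((2 ^ p)%:R : R).
Implicit Types (A C D F : {set 'I_p}) (Nf Ng : {set 'I_p} -> 'M[R]_n).

Definition clsym Nf := forall C, (Nf C)^T = cl s C C *: Nf C.

Lemma clsymE Nf : clsym Nf -> forall C i j, Nf C j i = cl s C C * Nf C i j.
Proof. by move=> Nsym C i j; have /matrixP/(_ i j) := Nsym C; rewrite !mxE. Qed.

Lemma sum_coord (G : Defs.coord p n -> R) :
  \sum_a G a = \sum_C \sum_(i < n) \sum_(j < n) G ((C, i), j).
Proof.
transitivity (\sum_(Ci : {set 'I_p} * 'I_n) \sum_(j < n) G (Ci, j)).
  by rewrite pair_big; apply: eq_bigr => -[Ci j].
by rewrite [RHS]pair_big; apply: eq_bigr => -[C i].
Qed.

Lemma sum_pick2 (H : 'I_n -> 'I_n -> R) i j :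
  \sum_k \sum_l ((i == k) && (j == l))%:R * H k l = H i j.
Proof.
rewrite (bigD1 i) //= [X in _ + X]big1 => [|k ki]; last first.
  by rewrite big1 // => l _; rewrite eq_sym (negbTE ki) mul0r.
rewrite addr0 (bigD1 j) //= [X in _ + X]big1 => [|l lj]; last first.
  by rewrite eqxx eq_sym (negbTE lj) mul0r.
by rewrite !eqxx mul1r addr0.
Qed.

Lemma gam_sum (G : Defs.coord p n -> R) C i j :
  \sum_b gam s ((C, i), j) b * G b
  = 2^-1 * (G ((C, i), j) + cl s C C * G ((C, j), i)).
Proof.
rewrite sum_coord (bigD1 C) //= [X in _ + X]big1 => [|D DC]; last first.
  rewrite big1 // => k _; rewrite big1 // => l _.
  by rewrite eq_sym (negbTE DC) mul0r.
have pickT : G ((C, j), i)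
    = \sum_k \sum_l ((i == l) && (j == k))%:R * G ((C, k), l).
  rewrite exchange_big; symmetry.
  exact: (sum_pick2 (fun l k => G ((C, k), l))).
rewrite eqxx addr0 pickT -(sum_pick2 (fun k l => G ((C, k), l))).
rewrite !mulr_sumr -big_split mulr_sumr; apply: eq_bigr => k _.
rewrite !mulr_sumr -big_split mulr_sumr; apply: eq_bigr => l _ /=; ring.
Qed.

Lemma tr_clmx_mul Nf Ng :
  \tr (clmx s Nf *m clmx s Ng) = two_p * \sum_D cl s D D * \tr (Nf D *m Ng D).
Proof.
rewrite clmx_mul tr_clmx raddf_sum; congr (_ * _); apply: eq_bigr => D _.
by rewrite symdiff0l cl0r mulr1; apply: mxtraceZ.
Qed.

Lemma tr_clmx_unit Nf C i j :
  \tr (clmx s Nf *m E ((C, i), j)) = two_p * (cl s C C * Nf C j i).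
Proof.
rewrite tr_clmx_mul (bigD1 C) //= [X in _ + X]big1 => [|D DC]; last first.
  by rewrite /unitM (negbTE DC) mulmx0 linear0 mulr0.
by rewrite /unitM eqxx tr_delta addr0.
Qed.

Lemma clmx_mul_unit Nf C k l :
  clmx s Nf *m E ((C, k), l) =
  clmx s (fun D => (cl s (symdiff D C) (symdiff D C) * cl s (symdiff D C) D)
                     *: (Nf (symdiff D C) *m delta_mx k l)).
Proof.
rewrite clmx_mul; apply: clmx_ext => D.
rewrite (bigD1 (symdiff D C)) //= [X in _ + X]big1 ?symdiffK /unitM ?eqxx //.
  by rewrite addr0.
move=> F FDC; have /negbTE-> : symdiff D F != C.
  by apply: contra FDC => /eqP <-; rewrite symdiffK.
by rewrite mulmx0 scaler0.
Qed.

Lemma tr_quad_unit Nf C i j k l :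
  \tr (clmx s Nf *m E ((C, k), l) *m clmx s Nf *m E ((C, i), j))
  = two_p * \sum_D cl s D D * (Nf (symdiff D C) j k * Nf (symdiff D C) l i).
Proof.
rewrite -mulmxA !clmx_mul_unit tr_clmx_mul; congr (_ * _).
apply: eq_bigr => D _.
rewrite -scalemxAl -scalemxAr !mxtraceZ tr_delta2 mulrA; congr (_ * _).
rewrite -[RHS]mul1r -{1}(cl_sq R s (symdiff D C) (symdiff D C)).
by rewrite -[RHS]mul1r -{1}(cl_sq R s (symdiff D C) D); ring.
Qed.

Lemma tr_mulE (X Y : 'M[R]_n) : \tr (X *m Y) = \sum_i \sum_j X i j * Y j i.
Proof. by apply: eq_bigr => i _; rewrite mxE. Qed.

(* Gamma applied to the gradient of X |-> tr(clmx Nf X) returns the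
   coordinates of the symmetric family Nf, up to the factor 2^p. *)
Lemma gam_grad_tr Nf : clsym Nf -> forall C i j,
  \sum_b gam s ((C, i), j) b * \tr (clmx s Nf *m E b) = two_p * Nf C i j.
Proof.
move=> Nsym C i j; rewrite (gam_sum (fun b => \tr (clmx s Nf *m E b))).
rewrite !tr_clmx_unit (clsymE Nsym C i j).
by case: (cl_sign R s C C) => ->; field.
Qed.

Lemma gamma_tr_tr (X Y : 'M[R]_(NN p n)) :
  isCl s X -> isCl s Y -> clsym (blk Y) ->
  \sum_a \sum_b gam s a b * \tr (X *m E a) * \tr (Y *m E b)
  = two_p * \tr (X *m Y).
Proof.
move=> ClX ClY Ysym.
have XE : X = clmx s (blk X) := isClE ClX.
have YE : Y = clmx s (blk Y) := isClE ClY.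
rewrite XE YE; under eq_bigr => a _ do under eq_bigr => b _ do rewrite mulrAC.
under eq_bigr => a _ do rewrite -mulr_suml.
rewrite sum_coord tr_clmx_mul !mulr_sumr; apply: eq_bigr => C _.
rewrite tr_mulE exchange_big !mulr_sumr; apply: eq_bigr => i _.
rewrite !mulr_sumr; apply: eq_bigr => j _.
by rewrite gam_grad_tr // tr_clmx_unit; ring.
Qed.

Lemma gam_quad Nf C i j :
  \sum_b gam s ((C, i), j) b
          * \tr (clmx s Nf *m E b *m clmx s Nf *m E ((C, i), j))
  = 2^-1 * two_p * \sum_D cl s D D *
      (Nf (symdiff D C) j i ^+ 2
       + cl s C C * (Nf (symdiff D C) j j * Nf (symdiff D C) i i)).
Proof.
rewrite (gam_sum (fun b =>
  \tr (clmx s Nf *m E b *m clmx s Nf *m E ((C, i), j)))).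
rewrite !tr_quad_unit -mulrA; congr (_ * _).
by rewrite !mulr_sumr -big_split; apply: eq_bigr => D _ /=; ring.
Qed.

Lemma sum_sq_entries Nf F : clsym Nf ->
  \sum_i \sum_j Nf F j i ^+ 2 = cl s F F * \tr (Nf F *m Nf F).
Proof.
move=> Nsym; rewrite tr_mulE mulr_sumr; apply: eq_bigr => i _.
rewrite mulr_sumr; apply: eq_bigr => j _; rewrite (clsymE Nsym F j i).
by case: (cl_sign R s F F) => ->; ring.
Qed.

Lemma tr_sqE (X : 'M[R]_n) : \tr X ^+ 2 = \sum_i \sum_j X j j * X i i.
Proof.
rewrite expr2 mulr_suml; apply: eq_bigr => i _.
by rewrite mulr_sumr; apply: eq_bigr => j _; rewrite mulrC.
Qed.

(* Summing gam_quad over the entries of the block C, reindexed by the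
   block F = D Delta C of Nf that occurs. *)
Lemma gam_quad_block Nf C : clsym Nf ->
  \sum_i \sum_j \sum_b
      gam s ((C, i), j) b
      * \tr (clmx s Nf *m E b *m clmx s Nf *m E ((C, i), j))
  = 2^-1 * two_p * \sum_F cl s (symdiff F C) (symdiff F C) *
      (cl s F F * \tr (Nf F *m Nf F) + cl s C C * \tr (Nf F) ^+ 2).
Proof.
move=> Nsym; under eq_bigr do under eq_bigr do rewrite gam_quad.
under eq_bigr do rewrite -mulr_sumr.
rewrite -mulr_sumr; congr (_ * _).
rewrite [RHS](reindex_inj (@symdiff_injr p C)) /=.
under eq_bigr do rewrite exchange_big; rewrite exchange_big /=.
apply: eq_bigr => D _; rewrite symdiffKr -sum_sq_entries // tr_sqE.
rewrite mulrDr !mulr_sumr -big_split; apply: eq_bigr => i _.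
by rewrite !mulr_sumr -big_split; apply: eq_bigr => j _; rewrite mulrDr.
Qed.

Lemma sum_cl_diag_shift F :
  \sum_C cl s (symdiff F C) (symdiff F C) = \sum_A cl (S:=R) s A A.
Proof. by rewrite [RHS](reindex_inj (@symdiff_inj p F)). Qed.

Lemma sum_cl_diag_shift_sign F :
  \sum_C cl s (symdiff F C) (symdiff F C) * cl s C C
  = cl s F F * Hfun (R:=R) s F.
Proof.
rewrite /Hfun mulr_sumr; apply: eq_bigr => C _.
by rewrite cl_symdiff_diag -[RHS]mulr1 -(cl_sq R s C C); ring.
Qed.

(* Gamma of the second-order term of log P: H(C) enters through the sign
   sums above. *)
Lemma gamma_tr_quad (X : 'M[R]_(NN p n)) : isCl s X -> clsym (blk X) ->
  \sum_a \sum_b gam s a b * \tr (X *m E b *m X *m E a)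
  = 2^-1 * (\sum_A cl s A A) * \tr (X *m X)
    + (two_p / 2) * \sum_C cl s C C * Hfun s C * (\tr (blk X C)) ^+ 2.
Proof.
move=> ClX Xsym; have XE : X = clmx s (blk X) := isClE ClX.
rewrite {1 2 3 4}XE sum_coord; under eq_bigr do rewrite gam_quad_block //.
rewrite -mulr_sumr exchange_big /=.
have per_block F :
  \sum_C cl s (symdiff F C) (symdiff F C) *
      (cl s F F * \tr (blk X F *m blk X F) + cl s C C * \tr (blk X F) ^+ 2)
  = (\sum_A cl s A A) * (cl s F F * \tr (blk X F *m blk X F))
    + cl s F F * Hfun s F * \tr (blk X F) ^+ 2.
  rewrite -(sum_cl_diag_shift F) -(sum_cl_diag_shift_sign F) !mulr_suml.
  rewrite -big_split.
  by apply: eq_bigr => C _; rewrite mulrDr [_ * (cl s C C * _)]mulrA.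
rewrite (eq_bigr _ (fun F _ => per_block F)) big_split /= -mulr_sumr.
rewrite tr_clmx_mul.
by rewrite mulrDr; congr (_ + _); ring.
Qed.
End GammaContraction.

Lemma clsym_blk (R : numFieldType) (p n : nat) (s : 'I_p -> 'I_p -> bool)
  (X : 'M[R]_(NN p n)) : isCl s X -> X^T = X -> clsym s (blk X).
Proof.
move=> /isClE XE XT C.
have := blk_clmx s (fun C => cl s C C *: (blk X C)^T) C.
rewrite -trmx_clmx -XE XT => {2}->.
by rewrite scalerA cl_sq scale1r.
Qed.

Section MainTheorem.
Variables (R : realFieldType) (p n : nat) (s : 'I_p -> 'I_p -> bool)
  (M : {set 'I_p} -> 'M[R]_n).
Hypothesis Msym : clsym s M.
Local Notation B := (clmx s M).
Local Notation P := (Ppoly s M).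

Lemma clmx_sym : B^T = B.
Proof.
rewrite trmx_clmx; apply: clmx_ext => C.
by rewrite Msym scalerA cl_sq scale1r.
Qed.

Lemma shift_sym x : (B - x%:M)^T = B - x%:M.
Proof. by rewrite raddfB /= clmx_sym tr_scalar_mx. Qed.

Lemma isCl_shift x : isCl s (B - x%:M).
Proof.
apply: isCl_add; first by exists M.
by rewrite -scaleN1r; apply/isCl_scale/isCl_scalar.
Qed.

Lemma clsym_adj x : clsym s (blk (\adj (B - x%:M))).
Proof.
by apply: clsym_blk; [exact/isCl_adj/isCl_shift | rewrite trmx_adj shift_sym].
Qed.

Lemma det_shift x : P.[x] = \det (B - x%:M).
Proof. exact: horner_det_charmx. Qed.

Lemma unit_shift x : P.[x] != 0 -> B - x%:M \in unitmx.
Proof. by rewrite det_shift unitmxE unitfE. Qed.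

Local Notation V x := (invmx (B - x%:M)).
Local Notation E a := (clmx s (unitM R a)).

Lemma resolvent_clsym x : P.[x] != 0 ->
  clsym s (blk (V x)) /\ V x = clmx s (blk (V x)).
Proof.
move=> Px; have ClV := isCl_invmx (isCl_shift x) (unit_shift Px).
split; last exact: isClE.
by apply: clsym_blk => //; rewrite trmx_inv shift_sym.
Qed.

Lemma GammaCl_P x y : x != y ->
  GammaCl s (Pfun s x) (Pfun s y) M
  = 2 ^+ p / (y - x) * (P^`().[x] * P.[y] - P^`().[y] * P.[x]).
Proof.
move=> xy; rewrite /GammaCl.
under eq_bigr do under eq_bigr do rewrite !d1_Pfun.
rewrite gamma_tr_tr; try by [apply/isCl_adj/isCl_shift | apply: clsym_adj].
rewrite tr_adj_mul_adj // /Ppoly !horner_deriv_det_charmx !horner_det_charmx.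
rewrite natrX.
by field; rewrite !subr_eq0 eq_sym xy.
Qed.

(* L(P)/P: L P = det(B - x) (2^p tr(U^2) - Gamma of tr(U E_b U E_a)), while
   Gamma(P, P) = det(B - x)^2 2^p tr(U^2). *)
Lemma LCl_P x : P.[x] != 0 ->
  LCl s (Pfun s x) M / P.[x]
  = GammaCl s (Pfun s x) (Pfun s x) M / P.[x] ^+ 2
    - 2^-1 * (\sum_(A : {set 'I_p}) cl s A A) * \tr (V x *m V x)
    - (2 ^+ p / 2) * \sum_(C : {set 'I_p})
                        cl s C C * Hfun s C * (\tr (blk (V x) C)) ^+ 2.
Proof.
move=> Px; have unitBx := unit_shift Px; have [Vsym VE] := resolvent_clsym Px.
have ClV : isCl s (V x) by exists (blk (V x)).
have S1 := gamma_tr_tr ClV ClV Vsym.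
have S2 := gamma_tr_quad ClV Vsym.
have hL : LCl s (Pfun s x) M
      = \det (B - x%:M) * ((2 ^ p)%:R * \tr (V x *m V x))
        - \det (B - x%:M)
          * (\sum_a \sum_b gam s a b * \tr (V x *m E b *m V x *m E a)).
  rewrite -S1 !mulr_sumr -sumrB; apply: eq_bigr => a _.
  rewrite !mulr_sumr -sumrB; apply: eq_bigr => b _.
  by rewrite d2_Pfun //; ring.
have hG : GammaCl s (Pfun s x) (Pfun s x) M
      = \det (B - x%:M) ^+ 2 * ((2 ^ p)%:R * \tr (V x *m V x)).
  rewrite -S1 mulr_sumr; apply: eq_bigr => a _.
  rewrite mulr_sumr; apply: eq_bigr => b _.
  by rewrite !d1_Pfun adj_invmx // -!scalemxAl !mxtraceZ; ring.
rewrite hL hG S2 det_shift natrX; field.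
by rewrite -det_shift.
Qed.

Lemma tr_resolvent_sq x : P.[x] != 0 ->
  \tr (V x *m V x) = P^`().[x] ^+ 2 / P.[x] ^+ 2 - P^`()^`().[x] / P.[x].
Proof.
move=> Px; have unitBx := unit_shift Px; rewrite det_shift in Px.
rewrite /Ppoly horner_deriv2_det_charmx // horner_deriv_det_charmx.
rewrite horner_det_charmx.
by rewrite adj_invmx // mxtraceZ; field.
Qed.

End MainTheorem.

Unset Implicit Arguments.

Theorem mainTheorem13 (R : realFieldType) (p n : nat)
  (s : 'I_p -> 'I_p -> bool)
  (hs : forall i j : 'I_p, (i < j)%N -> s i j = false)
  (hn : (0 < n)%N)
  (M : {set 'I_p} -> 'M[R]_n)
  (hM : forall C, (M C)^T = cl s C C *: M C) :
  let P := Ppoly s M in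
  [/\ (* U(X) is Cl(E)-symmetric *)
      (forall x : R, P.[x] != 0 ->
         let U := Umx s M x in
         (forall C, (blk U C)^T = cl s C C *: blk U C) /\ U = clmx s (blk U)),
      (* Gamma(P(X), P(Y)) *)
      (forall x y : R, x != y ->
         GammaCl s (Pfun s x) (Pfun s y) M
         = (2 ^+ p) / (y - x) * (P^`().[x] * P.[y] - P^`().[y] * P.[x])),
      (* L(P)/P ; Gamma(log P, log P) = Gamma(P,P)/P^2 *)
      (forall x : R, P.[x] != 0 ->
         let U := Umx s M x in
         LCl s (Pfun s x) M / P.[x]
         = GammaCl s (Pfun s x) (Pfun s x) M / P.[x] ^+ 2
           - 2^-1 * (\sum_(A : {set 'I_p}) cl s A A) * \tr (U *m U)
           - (2 ^+ p / 2) * \sum_(C : {set 'I_p})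
                               cl s C C * Hfun s C * (\tr (blk U C)) ^+ 2) &
      (* trace(U^2) *)
      (forall x : R, P.[x] != 0 ->
         let U := Umx s M x in
         \tr (U *m U) = P^`().[x] ^+ 2 / P.[x] ^+ 2 - P^`()^`().[x] / P.[x])].
Proof.
move=> P; split.
- move=> x Px; exact: resolvent_clsym hM x Px.
- move=> x y xy; exact: GammaCl_P hM x y xy.
- move=> x Px; exact: LCl_P hM x Px.
- move=> x Px; exact: tr_resolvent_sq Px.
Qed.
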